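(* Let $P$ be a causal stable system on $\mathcal{L}_{2e+}^n$ that is very strictly passive, i.e., there exist $\nu,\rho>0$ such that $$\langle u,Pu\rangle\ge\nu\|u\|_2^2+\rho\|Pu\|_2^2\quad\forall u\in\mathcal{L}_{2+}.$$ Then $\theta(P)\le\arccos\big(2\sqrt{\nu\rho}\big)<\pi/2$.
   Context: For $n\ge1$, $\mathcal{L}_2^n$ is the set of measurable $u:\mathbb{R}\to\mathbb{R}^n$ with $\|u\|_2^2=\int|u(t)|^2dt<\infty$, inner product $\langle u,v\rangle=\int u(t)^Tv(t)\,dt$; $\mathcal{L}_{2+}=\{u\in\mathcal{L}_2:u(t)=0\ \text{for}\ t<0\}$. For $T\ge0$, $(\Gamma_Tu)(t)=u(t)$ for $t\le T$, $0$ for $t>T$; $\mathcal{L}_{2e+}=\{u:\Gamma_Tu\in\mathcal{L}_{2+}\ \forall T\ge0\}$. A system is an operator $P:\mathcal{L}_{2e+}\to\mathcal{L}_{2e+}$ with $P0=0$, $P\ne0$; causal if $\Gamma_TP=\Gamma_TP\Gamma_T$ for all $T\ge0$; a causal system is stable if $Pu\in\mathcal{L}_{2+}$ for all $u\in\mathcal{L}_{2+}$ and $\sup_{0\ne u\in\mathcal{L}_{2+}}\|Pu\|_2/\|u\|_2<\infty$. The singular angle $\theta(P)\in[0,\pi]$ is given by $\cos\theta(P)=\inf\{\langle u,Pu\rangle/(\|u\|_2\|Pu\|_2):0\neq u\in\mathcal{L}_{2+},\ Pu\ne0\}$. *)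

From HB Require Import structures.
From mathcomp Require Import all_boot all_order all_algebra.
From mathcomp Require Import all_classical all_reals all_analysis.
Set Implicit Arguments. Unset Strict Implicit. Unset Printing Implicit Defensive.
Import Order.TTheory GRing.Theory Num.Theory.
Local Open Scope classical_set_scope.
Local Open Scope ring_scope.

Definition signal (R : realType) (n : nat) := R -> 'I_n -> R.

Definition sqnorm (R : realType) (n : nat) (x : 'I_n -> R) : R :=
  \sum_(i < n) x i ^+ 2.

Definition L2 (R : realType) (n : nat) (u : signal R n) : Prop :=
  (forall i : 'I_n, measurable_fun [set: R] (fun t => u t i)) /\
  (\int[@lebesgue_measure R]_(t in [set: R]) (sqnorm (u t))%:E < +oo)%E.

Definition L2p (R : realType) (n : nat) (u : signal R n) : Prop :=
  L2 u /\ (forall t, t < 0 -> u t = (fun _ => 0)).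

Definition trunc (R : realType) (n : nat) (T : R) (u : signal R n) : signal R n :=
  fun t => if t <= T then u t else (fun _ => 0).

Definition L2ep (R : realType) (n : nat) (u : signal R n) : Prop :=
  forall T : R, 0 <= T -> L2p (trunc T u).

Definition inner (R : realType) (n : nat) (u v : signal R n) : R :=
  Rintegral (@lebesgue_measure R) [set: R] (fun t => \sum_(i < n) u t i * v t i).

Definition norm2 (R : realType) (n : nat) (u : signal R n) : R :=
  Num.sqrt (inner u u).

Definition zero_signal (R : realType) (n : nat) : signal R n := fun _ _ => 0.

Definition is_system (R : realType) (n : nat) (P : signal R n -> signal R n) : Prop :=
  (forall u, L2ep u -> L2ep (P u)) /\
  P (@zero_signal R n) = @zero_signal R n /\
  (exists u, L2ep u /\ P u <> @zero_signal R n).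

Definition causal (R : realType) (n : nat) (P : signal R n -> signal R n) : Prop :=
  forall (T : R) (u : signal R n), 0 <= T -> L2ep u ->
    trunc T (P u) = trunc T (P (trunc T u)).

(* nonzero elements of L2 are those of nonzero norm (L2 is a space of classes) *)
Definition stable (R : realType) (n : nat) (P : signal R n -> signal R n) : Prop :=
  (forall u, L2p u -> L2p (P u)) /\
  (exists c : R, forall u, L2p u -> norm2 u != 0 -> norm2 (P u) / norm2 u <= c).

Definition singular_angle (R : realType) (n : nat) (P : signal R n -> signal R n) : R :=
  acos (inf [set r | exists u, [/\ L2p u, norm2 u != 0, norm2 (P u) != 0 &
                                   r = inner u (P u) / (norm2 u * norm2 (P u))]]).

(** Very strict passivity and the weighted AM-GM inequality give
    [<u, Pu> >= nu |u|^2 + rho |Pu|^2 >= 2 sqrt(nu rho) |u| |Pu|], so every cosine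
    in the definition of the singular angle is at least [2 sqrt(nu rho)]; since
    [acos] is decreasing, [theta(P) <= acos (2 sqrt(nu rho))].  The set of cosines
    is nonempty: a nonzero input exists as [n > 0], and passivity forbids [Pu = 0].
    Cauchy-Schwarz for that input shows [2 sqrt(nu rho) <= 1], so the bound lies
    in [[0, pi/2)]. *)
From HB Require Import structures.
From mathcomp Require Import all_boot all_order all_algebra.
From mathcomp Require Import all_classical all_reals all_analysis.
From mathcomp Require Import measurable_realfun ring lra.
Set Implicit Arguments. Unset Strict Implicit. Unset Printing Implicit Defensive.
Import Order.TTheory GRing.Theory Num.Theory.
Local Open Scope ring_scope.

Section RealInequalities.
Variable R : realFieldType.

Lemma ler_norm_mul_sqr (x y : R) : `|x * y| <= x ^+ 2 + y ^+ 2.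
Proof. by rewrite ler_norml; apply/andP; split; nra. Qed.

Lemma mul_le_amgm (t x y : R) : 0 < t ->
  x * y <= t / 2 * x ^+ 2 + (2 * t)^-1 * y ^+ 2.
Proof.
move=> t_gt0; rewrite -subr_ge0.
have -> : t / 2 * x ^+ 2 + (2 * t)^-1 * y ^+ 2 - x * y = (t * x - y) ^+ 2 / (2 * t).
  by field; rewrite gt_eqF.
by rewrite divr_ge0 ?sqr_ge0 ?mulr_ge0 ?ltW.
Qed.

Lemma le0_of_le_mul_pos (x c : R) : (forall t, 0 < t -> x <= c * t) -> x <= 0.
Proof.
move=> x_le; rewrite leNgt; apply/negP => x_gt0.
have c1_gt0 : 0 < `|c| + 1 by rewrite ltr_pwDr.
have t_gt0 : 0 < x / (2 * (`|c| + 1)) by rewrite divr_gt0 ?mulr_gt0.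
have := x_le _ t_gt0; apply/negP; rewrite -ltNge.
apply: (le_lt_trans (ler_wpM2r (ltW t_gt0) (ler_norm c))).
rewrite -subr_gt0.
have -> : x - `|c| * (x / (2 * (`|c| + 1))) = x * (`|c| + 2) / (2 * (`|c| + 1)).
  by field; rewrite gt_eqF.
by rewrite divr_gt0 ?mulr_gt0 // ltr_wpDl.
Qed.

(** [t = b / a] is the optimal weight; if [a] (resp. [b]) vanishes,
    let [t] tend to [oo] (resp. [0]). *)
Lemma le_mul_of_amgm (x a b : R) : 0 <= a -> 0 <= b ->
  (forall t, 0 < t -> x <= t / 2 * a ^+ 2 + (2 * t)^-1 * b ^+ 2) -> x <= a * b.
Proof.
move=> a_ge0 b_ge0 amgm.
move: a_ge0; rewrite le_eqVlt => /predU1P[a0|a_gt0].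
  subst a; rewrite mul0r; apply: (le0_of_le_mul_pos (c := b ^+ 2 / 2)) => t t_gt0.
  have := amgm t^-1; rewrite invr_gt0 => /(_ t_gt0); congr (_ <= _).
  by field; rewrite gt_eqF.
move: b_ge0; rewrite le_eqVlt => /predU1P[b0|b_gt0].
  subst b; rewrite mulr0; apply: (le0_of_le_mul_pos (c := a ^+ 2 / 2)) => t t_gt0.
  have := amgm _ t_gt0; congr (_ <= _).
  by rewrite expr0n mulr0 addr0; field.
have := amgm _ (divr_gt0 b_gt0 a_gt0); congr (_ <= _).
by field; rewrite !gt_eqF.
Qed.

End RealInequalities.

Lemma amgm_sqrt (R : rcfType) (nu rho a b : R) : 0 <= nu -> 0 <= rho ->
  2 * Num.sqrt (nu * rho) * (a * b) <= nu * a ^+ 2 + rho * b ^+ 2.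
Proof.
move=> nu_ge0 rho_ge0; rewrite sqrtrM // -subr_ge0.
have -> : nu * a ^+ 2 + rho * b ^+ 2 - 2 * (Num.sqrt nu * Num.sqrt rho) * (a * b)
    = (Num.sqrt nu * a - Num.sqrt rho * b) ^+ 2.
  by rewrite sqrrB !exprMn !sqr_sqrtr //; ring.
exact: sqr_ge0.
Qed.

Section L2InnerProduct.
Variables (R : realType) (n : nat).
Local Notation mu := (@lebesgue_measure R).
Local Open Scope classical_set_scope.

Lemma sqnorm_ge0 (x : 'I_n -> R) : 0 <= sqnorm x.
Proof. by apply: sumr_ge0 => i _; exact: sqr_ge0. Qed.

Lemma integrable_sqnorm (u : signal R n) : L2 u ->
  mu.-integrable [set: R] (EFin \o (fun t => sqnorm (u t))).
Proof.
move=> [u_meas u_fin]; apply/integrableP; split.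
  by apply/measurable_EFinP; apply: measurable_sum => i; exact: measurable_funX (u_meas i).
by under eq_integral => t _ do rewrite /= ger0_norm ?sqnorm_ge0 //.
Qed.

Lemma integrable_inner (u v : signal R n) : L2 u -> L2 v ->
  mu.-integrable [set: R] (EFin \o (fun t => \sum_(i < n) u t i * v t i)).
Proof.
move=> u_L2 v_L2.
apply: (le_integrable measurableT _ _
  (integrableD measurableT (integrable_sqnorm u_L2) (integrable_sqnorm v_L2))).
  apply/measurable_EFinP; apply: measurable_sum => i.
  exact: measurable_funM (u_L2.1 i) (v_L2.1 i).
move=> t _ /=; rewrite lee_fin (@ger0_norm _ (_ + _)) ?addr_ge0 ?sqnorm_ge0 //.
apply: le_trans (ler_norm_sum _ _ _) _.
by rewrite /sqnorm -big_split /=; apply: ler_sum => i _; exact: ler_norm_mul_sqr.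
Qed.

Lemma inner_sqnorm (u : signal R n) :
  inner u u = Rintegral mu [set: R] (fun t => sqnorm (u t)).
Proof. by apply: eq_Rintegral => t _; apply: eq_bigr => i _; rewrite expr2. Qed.

Lemma inner_ge0 (u : signal R n) : 0 <= inner u u.
Proof. by rewrite inner_sqnorm; apply: Rintegral_ge0 => t _; exact: sqnorm_ge0. Qed.

Lemma sqr_norm2 (u : signal R n) : norm2 u ^+ 2 = inner u u.
Proof. by rewrite sqr_sqrtr // inner_ge0. Qed.

Lemma norm2_ge0 (u : signal R n) : 0 <= norm2 u.
Proof. exact: sqrtr_ge0. Qed.

Lemma norm2_gt0 (u : signal R n) : (0 < norm2 u) = (norm2 u != 0).
Proof. by rewrite lt_def norm2_ge0 andbT. Qed.

Lemma inner_le_amgm (u v : signal R n) (t : R) : L2 u -> L2 v -> 0 < t ->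
  inner u v <= t / 2 * norm2 u ^+ 2 + (2 * t)^-1 * norm2 v ^+ 2.
Proof.
move=> u_L2 v_L2 t_gt0; rewrite !sqr_norm2 !inner_sqnorm.
have [Iu Iv] := (integrable_sqnorm u_L2, integrable_sqnorm v_L2).
rewrite -(RintegralZl _ _ Iu) // -(RintegralZl _ _ Iv) // -RintegralD //.
- apply: le_Rintegral => //; first exact: integrable_inner.
  + by apply: eq_integrable (integrableD measurableT
      (integrableZl measurableT _ Iu) (integrableZl measurableT _ Iv)).
  + move=> x _; rewrite /sqnorm !mulr_sumr -big_split /=.
    by apply: ler_sum => i _; exact: mul_le_amgm.
- by apply: eq_integrable (integrableZl measurableT _ Iu).
- by apply: eq_integrable (integrableZl measurableT _ Iv).
Qed.

Lemma inner_le_norm2 (u v : signal R n) : L2 u -> L2 v ->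
  inner u v <= norm2 u * norm2 v.
Proof.
move=> u_L2 v_L2; apply: le_mul_of_amgm; rewrite ?norm2_ge0 // => t.
exact: inner_le_amgm.
Qed.

End L2InnerProduct.

Lemma exists_L2p_norm2_neq0 (R : realType) (n : nat) : (0 < n)%N ->
  exists u : signal R n, L2p u /\ norm2 u != 0.
Proof.
move=> n_gt0.
pose A : set R := `[0, 1]%classic.
pose u : signal R n := fun t _ => \1_A t.
have sqnorm_u t : sqnorm (u t) = n%:R * \1_A t.
  rewrite /sqnorm /u sumr_const card_ord mulr_natl indicE.
  by case: (t \in A); rewrite ?expr1n ?expr0n.
have IA := @integrable_indic_itv R 0 1 true false.
have Iu : (@lebesgue_measure R).-integrable [set: R] (EFin \o (fun t => sqnorm (u t))).
  by apply: eq_integrable (integrableZl measurableT n%:R IA) => // t _ /=; rewrite sqnorm_u.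
have u_L2 : L2 u.
  split; first by move=> i; apply: measurable_indic; exact: measurable_itv.
  move/integrableP: Iu => [_].
  by under eq_integral => t _ do rewrite /= ger0_norm ?sqnorm_ge0 //.
exists u; split; first split => // t t_lt0.
  apply/funext => i; rewrite /u indicE.
  rewrite (_ : t \in A = false) //.
  by apply/negbTE/negP => /set_mem; rewrite /A /= in_itv /= leNgt t_lt0.
rewrite -norm2_gt0 sqrtr_gt0 inner_sqnorm.
under eq_Rintegral do rewrite sqnorm_u.
rewrite RintegralZl // /Rintegral integral_indic //; last exact: measurable_itv.
rewrite [fine _](_ : _ = 1) ?mulr1 ?ltr0n //.
rewrite setIT /A; apply: eq_trans (f_equal fine (lebesgue_measure_itv _)) _.
by rewrite /= lte_fin ltr01 /= subr0.
Qed.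

Section AcosMonotone.
Variable R : realType.

Lemma acos_itv (x : R) : x \in `[-1, 1] -> acos x \in `[0, pi].
Proof. by rewrite !in_itv /= => x_in; rewrite acos_ge0 ?acos_lepi. Qed.

Lemma ltr_acos : {in `[-1, 1] &, {mono (@acos R) : x y /~ y < x}}.
Proof.
move=> x y x_in y_in.
by rewrite -[in RHS](acosK x_in) -[in RHS](acosK y_in) ltr_cos ?acos_itv.
Qed.

Lemma ler_acos : {in `[-1, 1] &, {mono (@acos R) : x y /~ y <= x}}.
Proof. by move=> x y x_in y_in; rewrite !leNgt ltr_acos. Qed.

End AcosMonotone.

Section SingularAngle.
Variables (R : realType) (n : nat) (P : signal R n -> signal R n).
Hypothesis P_L2p : forall u, L2p u -> L2p (P u).
Local Open Scope classical_set_scope.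

Lemma inner_ratio_le1 (u : signal R n) : L2p u -> norm2 (P u) != 0 ->
  inner u (P u) / (norm2 u * norm2 (P u)) <= 1.
Proof.
move=> u_L2p Pu_neq0.
have [->|u_neq0] := eqVneq (norm2 u) 0; first by rewrite mul0r invr0 mulr0.
rewrite ler_pdivrMr ?mul1r ?mulr_gt0 ?norm2_gt0 //.
exact: inner_le_norm2 u_L2p.1 (P_L2p u_L2p).1.
Qed.

Lemma singular_angle_le_acos (c : R) (u0 : signal R n) :
  -1 <= c -> L2p u0 -> norm2 u0 != 0 -> norm2 (P u0) != 0 ->
  (forall u, L2p u -> norm2 u != 0 -> norm2 (P u) != 0 ->
     c <= inner u (P u) / (norm2 u * norm2 (P u))) ->
  singular_angle P <= acos c.
Proof.
move=> c_geN1 u0_L2p u0_neq0 Pu0_neq0 c_lb.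
rewrite /singular_angle; set S := (X in acos (inf X)).
have S_u0 : S (inner u0 (P u0) / (norm2 u0 * norm2 (P u0))) by exists u0.
have c_le_inf : c <= inf S.
  by apply: lb_le_inf; [eexists; exact: S_u0 | move=> _ [u [? ? ? ->]]; exact: c_lb].
have inf_le1 : inf S <= 1.
  apply: le_trans (ge_inf _ S_u0) (inner_ratio_le1 u0_L2p Pu0_neq0).
  by exists c => _ [u [? ? ? ->]]; exact: c_lb.
by rewrite ler_acos // in_itv /= ?c_geN1 ?(le_trans c_geN1) ?(le_trans c_le_inf).
Qed.

End SingularAngle.

Section VeryStrictlyPassive.
Variables (R : realType) (n : nat) (P : signal R n -> signal R n) (nu rho : R).
Hypotheses (P_L2p : forall u, L2p u -> L2p (P u)) (nu_gt0 : 0 < nu) (rho_gt0 : 0 < rho).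
Hypothesis P_vsp : forall u : signal R n, L2p u ->
  nu * norm2 u ^+ 2 + rho * norm2 (P u) ^+ 2 <= inner u (P u).

(** If [Pu = 0] then [<u, Pu> <= nu/2 |u|^2] (AM-GM with weight [nu]), contradicting passivity. *)
Lemma vsp_norm2_neq0 (u : signal R n) : L2p u -> norm2 u != 0 -> norm2 (P u) != 0.
Proof.
move=> u_L2p u_neq0; apply/eqP => Pu0.
have := le_trans (P_vsp u_L2p) (inner_le_amgm u_L2p.1 (P_L2p u_L2p).1 nu_gt0).
rewrite Pu0 expr0n /= !mulr0 !addr0.
have : 0 < norm2 u ^+ 2 by rewrite exprn_gt0 // norm2_gt0.
by move=> /ler_pM2r ->; rewrite ler_pdivlMr // ger_pMr //; apply/negP; rewrite -ltNge ltr1n.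
Qed.

Lemma vsp_inner_ge (u : signal R n) : L2p u ->
  2 * Num.sqrt (nu * rho) * (norm2 u * norm2 (P u)) <= inner u (P u).
Proof. by move=> u_L2p; apply: le_trans (P_vsp u_L2p); rewrite amgm_sqrt ?ltW. Qed.

Lemma vsp_inner_ratio_ge (u : signal R n) : L2p u -> norm2 u != 0 -> norm2 (P u) != 0 ->
  2 * Num.sqrt (nu * rho) <= inner u (P u) / (norm2 u * norm2 (P u)).
Proof.
move=> u_L2p u_neq0 Pu_neq0.
by rewrite ler_pdivlMr ?mulr_gt0 ?norm2_gt0 //; exact: vsp_inner_ge.
Qed.

Lemma vsp_sqrt_le1 (u : signal R n) : L2p u -> norm2 u != 0 ->
  2 * Num.sqrt (nu * rho) <= 1.
Proof.
move=> u_L2p u_neq0; have Pu_neq0 := vsp_norm2_neq0 u_L2p u_neq0.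
exact: le_trans (vsp_inner_ratio_ge u_L2p u_neq0 Pu_neq0)
  (inner_ratio_le1 P_L2p u_L2p Pu_neq0).
Qed.

End VeryStrictlyPassive.

Theorem proposition2 (R : realType) (n : nat) (hn : (0 < n)%N)
  (P : signal R n -> signal R n)
  (hsys : is_system P) (hcausal : causal P) (hstable : stable P)
  (nu rho : R) (hnu : 0 < nu) (hrho : 0 < rho)
  (hvsp : forall u : signal R n, L2p u ->
     nu * norm2 u ^+ 2 + rho * norm2 (P u) ^+ 2 <= inner u (P u)) :
  singular_angle P <= acos (2 * Num.sqrt (nu * rho)) /\
  acos (2 * Num.sqrt (nu * rho)) < pi / 2.
Proof.
have P_L2p := hstable.1.
have [u0 [u0_L2p u0_neq0]] := exists_L2p_norm2_neq0 R hn.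
have c_gt0 : 0 < 2 * Num.sqrt (nu * rho) by rewrite mulr_gt0 ?sqrtr_gt0 ?mulr_gt0.
have c_le1 := vsp_sqrt_le1 P_L2p hnu hrho hvsp u0_L2p u0_neq0.
split.
  apply: (singular_angle_le_acos P_L2p _ u0_L2p u0_neq0).
  - by rewrite (le_trans _ (ltW c_gt0)) // lerN10.
  - exact: (vsp_norm2_neq0 P_L2p hnu hvsp u0_L2p u0_neq0).
  - by move=> u; exact: (vsp_inner_ratio_ge hnu hrho hvsp).
by rewrite -acos0 ltr_acos // in_itv /= ?c_le1 ?(le_trans _ (ltW c_gt0)) ?lerN10 ?ler01.
Qed.
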